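(* For every $n\ge1$, the coordinates $(p_j,u_j)$ of the trajectory $T_n$ satisfy $p_0>p_1>\dots>p_{n-1}>p_n=0$ and $0=u_0<u_1<\dots<u_n$.
   Context: $\Phi$ is the partial map of $\mathbb{R}^2$ defined for $p\ne0$ by $\Phi(p,u)=\bigl(p^2(u+1)-1,\ 1/p\bigr)$. For $n\ge1$, the trajectory $T_n$ is the (existing and unique) finite sequence $(p_j,u_j)$, $j=0,\dots,n$, with $(p_j,u_j)=\Phi(p_{j-1},u_{j-1})$ for $1\le j\le n$, $u_0=0$, $p_n=0$, and $p_j>0$ for $0\le j\le n-1$. *)

From Stdlib Require Import Reals.
Open Scope R_scope.

(* Phi(p,u) = (p^2 (u+1) - 1, 1/p); a partial map, defined for p <> 0.
   We write it as a total function; it is only ever applied at points with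
   p > 0 in the trajectory definition below, so the junk value 1/0 is never used. *)
Definition Phi (x : R * R) : R * R :=
  let (p, u) := x in (p ^ 2 * (u + 1) - 1, 1 / p).

Definition is_trajectory (n : nat) (p u : nat -> R) : Prop :=
  (forall j : nat, (1 <= j <= n)%nat -> (p j, u j) = Phi (p (j - 1)%nat, u (j - 1)%nat)) /\
  u 0%nat = 0 /\
  p n = 0 /\
  (forall j : nat, (j <= n - 1)%nat -> 0 < p j).

(* A state (p, u) with p > 0, u >= 0 and p u < 1 is "trapped": Phi either
   strictly decreases p, and then the image is trapped again as long as its
   p is positive, or sends it to an "escaping" state with p >= 1 and p u >= 1.
   Escaping states are mapped to escaping states, so a trajectory that escapes
   never reaches p = 0.  Since u_0 = 0, every state of T_n before the last one
   is therefore trapped, which gives p_{j+1} < p_j, and p_j u_j < 1 is exactly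
   u_j < 1/p_j = u_{j+1}. *)

From Stdlib Require Import Reals Lra Lia.
Open Scope R_scope.

Definition trapped (p u : R) : Prop := 0 < p /\ 0 <= u /\ p * u < 1.

Definition escaping (p u : R) : Prop := 1 <= p /\ 1 <= p * u.

Lemma escaping_inv_le (p p' : R) : 1 <= p <= p' -> escaping p' (1 / p).
Proof.
  intros [Hp Hpp']. split; [lra |].
  replace 1 with (p * (1 / p)) at 1 by (field; lra).
  apply Rmult_le_compat_r; [apply Rlt_le, Rdiv_lt_0_compat |]; lra.
Qed.

Lemma Phi_escaping (p u p' u' : R) :
  Phi (p, u) = (p', u') -> escaping p u -> escaping p' u'.
Proof.
  cbn. intros [= <- <-] [Hp Hpu].
  apply escaping_inv_le. nra.
Qed.

Lemma Phi_trapped_lt_or_escaping (p u p' u' : R) :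
  Phi (p, u) = (p', u') -> trapped p u -> p' < p \/ escaping p' u'.
Proof.
  cbn. intros [= <- <-] (Hp & Hu & Hpu).
  destruct (Rlt_or_le (p ^ 2 * (u + 1) - 1) p) as [Hlt | Hge]; [now left | right].
  (* p' = p (p u) + p^2 - 1 < p + p^2 - 1, which is < p when p < 1. *)
  assert (Hp1 : 1 <= p) by nra.
  now apply escaping_inv_le.
Qed.

Lemma Phi_trapped (p u p' u' : R) :
  Phi (p, u) = (p', u') -> trapped p u -> 0 < p' < p -> trapped p' u'.
Proof.
  cbn. intros [= Hp' <-] (Hp & _ & _) Hp'p.
  split; [lra |]. split.
  - apply Rlt_le, Rdiv_lt_0_compat; lra.
  - apply (Rmult_lt_reg_r p); [lra |].
    replace (p' * (1 / p) * p) with p' by (field; lra). lra.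
Qed.

Lemma Phi_trapped_snd_lt (p u p' u' : R) :
  Phi (p, u) = (p', u') -> trapped p u -> u < u'.
Proof.
  cbn. intros [= _ <-] (Hp & _ & Hpu).
  apply (Rmult_lt_reg_l p); [lra |].
  replace (p * (1 / p)) with 1 by (field; lra). lra.
Qed.

Section Trajectory.

Variables (n : nat) (p u : nat -> R).
Hypothesis traj : is_trajectory n p u.

Lemma trajectory_step (j : nat) :
  (j < n)%nat -> Phi (p j, u j) = (p (S j), u (S j)).
Proof.
  intros Hj. destruct traj as [Hstep _].
  rewrite (Hstep (S j)) by lia. now replace (S j - 1)%nat with j by lia.
Qed.

Lemma trajectory_pos (j : nat) : (j < n)%nat -> 0 < p j.
Proof. intros Hj. destruct traj as (_ & _ & _ & Hpos). apply Hpos. lia. Qed.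

Lemma trajectory_not_escaping (j : nat) : (j <= n)%nat -> ~ escaping (p j) (u j).
Proof.
  intros Hj Hesc.
  assert (Hpropagate : forall k, (j + k <= n)%nat -> escaping (p (j + k)%nat) (u (j + k)%nat)).
  { induction k as [| k IH]; intros Hk.
    - now rewrite Nat.add_0_r.
    - rewrite Nat.add_succ_r.
      apply (Phi_escaping _ _ _ _ (trajectory_step (j + k) ltac:(lia))), IH. lia. }
  destruct (Hpropagate (n - j)%nat ltac:(lia)) as [Hpn _].
  replace (j + (n - j))%nat with n in Hpn by lia.
  destruct traj as (_ & _ & Hn & _). lra.
Qed.

Lemma trajectory_lt_of_trapped (j : nat) :
  (j < n)%nat -> trapped (p j) (u j) -> p (S j) < p j.
Proof.
  intros Hj Htrap.
  destruct (Phi_trapped_lt_or_escaping _ _ _ _ (trajectory_step j Hj) Htrap) as [Hlt | Hesc];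
    [exact Hlt |].
  exfalso. exact (trajectory_not_escaping (S j) Hj Hesc).
Qed.

Lemma trajectory_trapped (j : nat) : (j < n)%nat -> trapped (p j) (u j).
Proof.
  induction j as [| j IH]; intros Hj.
  - destruct traj as (_ & Hu0 & _). rewrite Hu0.
    split; [now apply trajectory_pos | lra].
  - assert (Htrap := IH ltac:(lia)).
    apply (Phi_trapped _ _ _ _ (trajectory_step j ltac:(lia)) Htrap).
    split; [now apply trajectory_pos | now apply trajectory_lt_of_trapped; [lia |]].
Qed.

End Trajectory.

Theorem lemma4 (n : nat) (p u : nat -> R) :
  (1 <= n)%nat -> is_trajectory n p u ->
  (forall j : nat, (j < n)%nat -> p (S j) < p j) /\
  (forall j : nat, (j < n)%nat -> u j < u (S j)).
Proof.
  intros _ traj. split; intros j Hj;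
    assert (Htrap := trajectory_trapped n p u traj j Hj).
  - exact (trajectory_lt_of_trapped n p u traj j Hj Htrap).
  - exact (Phi_trapped_snd_lt _ _ _ _ (trajectory_step n p u traj j Hj) Htrap).
Qed.
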